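(* Under Assumptions A1–A3 (see context), with $\tilde{\bar\theta}_k=\theta-\bar\theta_k$, for every $k\ge0$: $$|\bar\psi_k|\ge\bar\beta_k|\phi_k^{\mathrm T}\tilde{\bar\theta}_k|\quad\text{and}\quad \phi_k^{\mathrm T}\tilde{\bar\theta}_k\,\bar\psi_k\ge0,$$ where $$\bar\psi_k=\mathbb E_k\{\operatorname{sgn}[y_{k+1}-S_k(\phi_k^{\mathrm T}\bar\theta_k)]\}+F_{k+1}(u_k-\phi_k^{\mathrm T}\bar\theta_k)\mathrm I_{[S_k(\phi_k^{\mathrm T}\bar\theta_k)=U_k]}-[1-F_{k+1}(l_k-\phi_k^{\mathrm T}\bar\theta_k)]\mathrm I_{[S_k(\phi_k^{\mathrm T}\bar\theta_k)=L_k]}.$$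
   Context: Setting. Let $\{\mathcal F_k\}_{k\ge0}$ be a nondecreasing sequence of $\sigma$-algebras and write $\mathbb E_k[\cdot]=\mathbb E[\cdot\mid\mathcal F_k]$. Observations follow the saturated model $y_{k+1}=S_k(\phi_k^{\mathrm T}\theta+\varepsilon_{k+1})$, $k=0,1,2,\dots$, where $\phi_k\in\mathbb R^d$ is $\mathcal F_k$-measurable, $\theta\in\mathbb R^d$ is unknown, $\varepsilon_{k+1}\in\mathbb R$ is noise ($\mathcal F_{k+1}$-measurable), and $S_k(x)=L_k$ if $x<l_k$, $S_k(x)=x$ if $l_k\le x\le u_k$, $S_k(x)=U_k$ if $x>u_k$. Assumption A1: $\{\phi_k\}$ is bounded in $k$, and $\theta$ is an interior point of a known convex compact set $D\subseteq\mathbb R^d$. Let $\{C_k\}$ be a bounded $\mathcal F_k$-adapted sequence with $\sup_{x\in D}|\phi_k^{\mathrm T}x|\le C_k$. Assumption A2: $l_k,u_k,L_k,U_k$ are known $\mathcal F_k$-measurable random variables with $L_k\le l_k\le u_k\le U_k$ a.s.; there is a constant $M$ with $\sup_{k\ge0}\max\{l_k,-u_k\}\le M<\infty$ a.s.; and $L_k=l_k=u_k=U_k$ does not hold a.s. The weights $b_k$ are known, $\mathcal F_k$-measurable, with $0<\inf_k b_k\le\sup_k b_k\le 1$. Assumption A3: the conditional distribution function $F_{k+1}$ of $\varepsilon_{k+1}$ given $\mathcal F_k$ satisfies $F_{k+1}(0)=1/2$; its conditional density $f_{k+1}$ is continuous and known; and there is a constant $C\ge\sup_k C_k$ with $0<\inf_{|x|\le\max\{2C,C+M\},k\ge0}f_{k+1}(x)\le\sup_{|x|\le\max\{2C,C+M\},k\ge0}f_{k+1}(x)<\infty$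 a.s. Projection: for positive definite $Q$, $\|x\|_Q^2=x^{\mathrm T}Qx$ and $\Pi_Q(x)=\arg\min_{y\in D}\|x-y\|_Q$. TSWLAD algorithm. Step 1: with $\bar\theta_0\in D$, $\bar P_0>0$, and an $\mathcal F_k$-adapted sequence $\bar\mu_k$ with $0<\inf\bar\mu_k\le\sup\bar\mu_k<\infty$, for $k\ge0$: $\bar\theta_{k+1}=\Pi_{\bar P_{k+1}^{-1}}\{\bar\theta_k+\bar a_k b_k\bar P_k\phi_k\bar v_{k+1}\}$, $\bar v_{k+1}=\operatorname{sgn}[y_{k+1}-S_k(\phi_k^{\mathrm T}\bar\theta_k)]+F_{k+1}(u_k-\phi_k^{\mathrm T}\bar\theta_k)\mathrm I_{[S_k(\phi_k^{\mathrm T}\bar\theta_k)=U_k]}-[1-F_{k+1}(l_k-\phi_k^{\mathrm T}\bar\theta_k)]\mathrm I_{[S_k(\phi_k^{\mathrm T}\bar\theta_k)=L_k]}$, $\bar P_{k+1}=\bar P_k-\bar a_k\bar\beta_k b_k^2\bar P_k\phi_k\phi_k^{\mathrm T}\bar P_k$, $\bar a_k=1/(\bar\mu_k+\bar\beta_k b_k^2\phi_k^{\mathrm T}\bar P_k\phi_k)$, $\bar\beta_k=\inf_{|x|\le\max\{2C_k,C_k+l_k,C_k-u_k\}}f_{k+1}(x)$. Step 2: with $\theta_0\in D$, $P_0>0$, and $\mu_k$ with $0<\inf\mu_k\le\sup\mu_k<\infty$, for $k\ge0$, letting $d_k=\phi_k^{\mathrm T}(\bar\theta_k-\theta_k)$: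 $\theta_{k+1}=\Pi_{P_{k+1}^{-1}}\{\theta_k+a_kb_kP_k\phi_kv_{k+1}\}$, $v_{k+1}=\operatorname{sgn}[y_{k+1}-S_k(\phi_k^{\mathrm T}\theta_k)]+F_{k+1}(u_k-\phi_k^{\mathrm T}\theta_k)\mathrm I_{[S_k(\phi_k^{\mathrm T}\theta_k)=U_k]}-[1-F_{k+1}(l_k-\phi_k^{\mathrm T}\theta_k)]\mathrm I_{[S_k(\phi_k^{\mathrm T}\theta_k)=L_k]}$, $P_{k+1}=P_k-a_k\beta_kb_k^2P_k\phi_k\phi_k^{\mathrm T}P_k$, $a_k=1/(\mu_k+\beta_kb_k^2\phi_k^{\mathrm T}P_k\phi_k)$, and $\beta_k=\frac{F_{k+1}(l_k-\phi_k^{\mathrm T}\theta_k)-F_{k+1}(l_k-\phi_k^{\mathrm T}\bar\theta_k)}{d_k}\mathrm I_{[d_k\ne0]}+f_{k+1}(l_k-\phi_k^{\mathrm T}\theta_k)\mathrm I_{[d_k=0]}$ if $S_k(\phi_k^{\mathrm T}\theta_k)=L_k$; $\beta_k=\frac{1-2F_{k+1}(\phi_k^{\mathrm T}\theta_k-\phi_k^{\mathrm T}\bar\theta_k)}{d_k}\mathrm I_{[d_k\ne0]}+2f_{k+1}(0)\mathrm I_{[d_k=0]}$ if $L_k<S_k(\phi_k^{\mathrm T}\theta_k)<U_k$; $\beta_k=\frac{F_{k+1}(u_k-\phi_k^{\mathrm T}\theta_k)-F_{k+1}(u_k-\phi_k^{\mathrm T}\bar\theta_k)}{d_k}\mathrm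 I_{[d_k\ne0]}+f_{k+1}(u_k-\phi_k^{\mathrm T}\theta_k)\mathrm I_{[d_k=0]}$ if $S_k(\phi_k^{\mathrm T}\theta_k)=U_k$. Here $\operatorname{sgn}$ is the sign function and $\mathrm I_{[\cdot]}$ the indicator. *)

From HB Require Import structures.
From mathcomp Require Import all_boot all_order all_algebra.
From mathcomp Require Import all_classical all_reals all_analysis.
Set Implicit Arguments. Unset Strict Implicit. Unset Printing Implicit Defensive.
Import Order.TTheory GRing.Theory Num.Theory.
Import numFieldNormedType.Exports.
Local Open Scope classical_set_scope.
Local Open Scope ring_scope.

Definition sat {R : realType} (L l u U x : R) : R :=
  if x < l then L else if u < x then U else x.

Definition dotp {R : realType} (d : nat) (phi x : 'cV[R]_d) : R :=
  (phi^T *m x) 0 0.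

Definition ind {R : realType} (b : bool) : R := if b then 1 else 0.

Definition convex_vset {R : realType} (d : nat) (D : set 'cV[R]_d) : Prop :=
  forall x y (t : R), D x -> D y -> 0 <= t -> t <= 1 ->
    D (t *: x + (1 - t) *: y).

Definition betabar {R : realType} (f : R -> R) (C l u : R) : R :=
  inf [set f x | x in [set x : R | `|x| <= Num.max (2 * C) (Num.max (C + l) (C - u))]].

(* bar psi_k, where the conditional expectation E_k sgn[y_{k+1} - S_k(phi^T thetabar)]
   is written as the integral against the conditional density f of eps_{k+1}
   given F_k, with a = phi_k^T theta and b = phi_k^T thetabar_k (F_k-measurable). *)
Definition psibar {R : realType} (f F : R -> R) (L l u U a b : R) : R :=
  fine (\int[lebesgue_measure]_x
          ((Num.sg (sat L l u U (a + x) - sat L l u U b) * f x)%:E))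
  + F (u - b) * ind (sat L l u U b == U)
  - (1 - F (l - b)) * ind (sat L l u U b == L).

(* Given F_k, the only randomness in bar psi_k is eps = eps_{k+1}, with density
   f and distribution function F.  With a = phi^T theta and b = phi^T thetabar,
   E_k sgn[S(a + eps) - S(b)] = P(S(a + eps) > S(b)) - P(S(a + eps) < S(b)),
   and as S is a nondecreasing clamp both events are half-lines in eps up to
   an endpoint.  In each regime b < l, u < b, l <= b <= u the correction terms
   cancel the saturated probabilities, leaving bar psi_k = k (F p - F q) with
   p - q = a - b and p, q within the radius K defining bar beta_k; k = 1,
   except when L < b < U, where F 0 = 1/2 gives k = 2.  Since F p - F q is
   the integral of f over ]q, p], it has the sign of p - q and modulus at
   least bar beta_k |p - q|. *)

From mathcomp Require Import all_boot all_order all_algebra.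
From mathcomp Require Import all_classical all_reals all_analysis.
From mathcomp Require Import measurable_realfun.
From mathcomp Require Import lra.
Import Order.TTheory GRing.Theory Num.Theory.
Import numFieldNormedType.Exports.
Local Open Scope classical_set_scope.
Local Open Scope ring_scope.

Lemma sgr_subE {R : realDomainType} (y s : R) :
  Num.sg (y - s) = (s < y)%R%:R - (y < s)%R%:R.
Proof.
case: ltgtP => [sy|ys|->]; last by rewrite subrr sgr0 subrr.
- by rewrite gtr0_sg ?subr_gt0 // subr0.
- by rewrite ltr0_sg ?subr_lt0 // sub0r.
Qed.

Section Saturation.
Context {R : realType} (L l u U : R).

Variant sat_spec (y : R) : R -> Type :=
  | SatLow of y < l : sat_spec y L
  | SatId of l <= y & y <= u : sat_spec y y
  | SatHigh of l <= y & u < y : sat_spec y U.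

Lemma satP y : sat_spec y (sat L l u U y).
Proof.
rewrite /sat; case: ltP => [|ly]; first exact: SatLow.
by case: ltP => [|yu]; [exact: SatHigh | exact: SatId].
Qed.

End Saturation.

Definition has_mass {R : realType} (f : R -> R) (A : set R) (v : R) :=
  measurable A /\ (\int[lebesgue_measure]_(x in A) (f x)%:E = v%:E)%E.

Section Density.
Context {R : realType} {f F : R -> R}.
Hypothesis f_ge0 : forall x, 0 <= f x.
Hypothesis f_int : lebesgue_measure.-integrable setT (fun x => (f x)%:E).
Hypothesis F_def :
  forall x, ((F x)%:E = \int[lebesgue_measure]_(t in `]-oo, x]) (f t)%:E)%E.

Local Notation mu := (@lebesgue_measure R).

Lemma measurable_density A : measurable_fun A (fun x => (f x)%:E).
Proof.
by case/integrableP: f_int => mf _; exact: measurable_funS (subsetT _) mf.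
Qed.

Lemma integral_density_split c (b : itv_bound R) : (BRight c <= b)%O ->
  (\int[mu]_(x in [set` Interval -oo%O b]) (f x)%:E =
   \int[mu]_(x in `]-oo, c]) (f x)%:E
   + \int[mu]_(x in [set` Interval (BRight c) b]) (f x)%:E)%E.
Proof.
move=> cb; rewrite (@itv_bndbnd_setU _ _ _ (BRight c)) //.
rewrite ge0_integral_setU //; first exact: measurable_density.
- by move=> x _; rewrite lee_fin.
- apply/disj_setPS => x [] /=; rewrite !in_itv /= => xc /andP[cx _].
  by move: (lt_le_trans cx xc); rewrite ltxx.
Qed.

Lemma integral_density_itv_oc q p : q <= p ->
  (\int[mu]_(x in `]q, p]) (f x)%:E = (F p - F q)%:E)%E.
Proof.
move=> qp; rewrite EFinB F_def (@integral_density_split q) ?bnd_simp //.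
by rewrite -F_def [X in _ = (X - _)%E]addeC addeK.
Qed.

Lemma cdf_increment_ge beta q p :
  q <= p -> (forall x, q < x -> x <= p -> beta <= f x) ->
  beta * (p - q) <= F p - F q.
Proof.
move=> qp hbeta; rewrite -lee_fin -integral_density_itv_oc //.
have [beta_le0|beta_gt0] := leP beta 0.
  apply: le_trans (integral_ge0 _ _); last by move=> x _; rewrite lee_fin.
  by rewrite lee_fin mulr_le0_ge0 // subr_ge0.
have beta_le_f : (\int[mu]_(x in `]q, p]) beta%:E <=
                  \int[mu]_(x in `]q, p]) (f x)%:E)%E.
  apply: ge0_le_integral => //.
  - by move=> x _; rewrite lee_fin ltW.
  - exact: measurable_density.
  - by move=> x /=; rewrite in_itv /= => /andP[qx xp]; rewrite lee_fin hbeta.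
apply: le_trans beta_le_f.
rewrite integral_cst //= lebesgue_measure_itv /= lte_fin.
case: ltP => [_|pq]; first by rewrite -EFinM.
have -> : p = q by apply/eqP; rewrite eq_le qp pq.
by rewrite subrr mulr0 mule0.
Qed.

Lemma cdf_increment_bounds {K beta : R} :
  (forall x, - K <= x -> x <= K -> beta <= f x) ->
  forall p q, - K <= p -> p <= K -> - K <= q -> q <= K ->
  beta * `|p - q| <= `|F p - F q| /\ 0 <= (p - q) * (F p - F q).
Proof.
move=> hbeta; suff bounds p q : - K <= q -> q <= p -> p <= K ->
    beta * `|p - q| <= `|F p - F q| /\ 0 <= (p - q) * (F p - F q).
  move=> p q Kp pK Kq qK; have [qp|/ltW pq] := leP q p; first exact: bounds.
  rewrite distrC (distrC (F p)) -[(p - q) * _]mulrNN !opprB; exact: bounds.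
move=> Kq qp pK.
have Fqp : 0 <= F p - F q.
  by rewrite -(mul0r (p - q)); apply: cdf_increment_ge => // x _ _.
rewrite (ger0_norm Fqp) ger0_norm ?subr_ge0 //.
split; last by rewrite mulr_ge0 // subr_ge0.
by apply: cdf_increment_ge => // x qx xp; apply: hbeta; lra.
Qed.

Lemma integral_density_restrict (A : set R) : measurable A ->
  (\int[mu]_x ((f \_ A) x)%:E = \int[mu]_(x in A) (f x)%:E)%E /\
  mu.-integrable setT (EFin \o f \_ A).
Proof.
move=> mA; rewrite [RHS]integral_mkcond restrict_EFin; split => //.
(* [integrable_mkcond] is stated for the Lebesgue sigma-algebra. *)
have mA' : measurable (A : set (g_sigma_algebraType R.-ocitv.-measurable)).
  exact: mA.
rewrite -restrict_EFin; apply/(integrable_mkcond _ mA').1.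
exact: integrableS f_int.
Qed.

Lemma integral_sgr_density {h : R -> R} {s vA vB : R} :
  has_mass f [set x | s < h x] vA -> has_mass f [set x | h x < s] vB ->
  fine (\int[mu]_x ((Num.sg (h x - s) * f x)%:E)) = vA - vB.
Proof.
move=> [mA intA] [mB intB].
have [restrA intfA] := integral_density_restrict _ mA.
have [restrB intfB] := integral_density_restrict _ mB.
have sgrE x : Num.sg (h x - s) * f x =
    (f \_ [set x | s < h x]) x - (f \_ [set x | h x < s]) x.
  by rewrite !patch_indic /= !indicE !mem_setE sgr_subE mulrBl !(mulrC (f x)).
under eq_integral => x _ do rewrite sgrE EFinB.
by rewrite integralB_EFin // restrA restrB intA intB.
Qed.

Lemma has_mass_empty (A : set R) : (forall x, ~ A x) -> has_mass f A 0.
Proof.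
move=> A0; have -> : A = set0 by apply/seteqP; split => x // /A0.
by split; rewrite ?integral_set0.
Qed.

Lemma has_mass_lower (A : set R) c :
  (forall x, x < c -> A x) -> (forall x, A x -> x <= c) -> has_mass f A (F c).
Proof.
move=> ltA Ale; have [Ac|Ac] := pselect (A c).
  have -> : A = `]-oo, c]%classic.
    apply/seteqP; split => x /=; rewrite in_itv /=; first exact: Ale.
    by rewrite le_eqVlt => /predU1P[->|/ltA].
  by split; rewrite -?F_def.
have -> : A = `]-oo, c[%classic.
  apply/seteqP; split => x /=; rewrite in_itv /=; last exact: ltA.
  by move=> Ax; rewrite lt_neqAle Ale // andbT; apply: contraPneq Ac => <-.
split; rewrite // integral_itv_bndo_bndc -?F_def //.
exact: measurable_density.
Qed.

Hypothesis f_mass1 : (\int[mu]_x (f x)%:E = 1)%E.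

Lemma integral_density_ray c :
  (\int[mu]_(x in `]c, +oo[) (f x)%:E = (1 - F c)%:E)%E.
Proof.
move: f_mass1; rewrite -set_itvNyy (@integral_density_split c) // -F_def.
by rewrite EFinB => <-; rewrite [X in _ = (X - _)%E]addeC addeK.
Qed.

Lemma has_mass_upper (A : set R) c :
  (forall x, c < x -> A x) -> (forall x, A x -> c <= x) ->
  has_mass f A (1 - F c).
Proof.
move=> gtA Age; have [Ac|Ac] := pselect (A c).
  have -> : A = `[c, +oo[%classic.
    apply/seteqP; split => x /=; rewrite in_itv /= andbT; first exact: Age.
    by rewrite le_eqVlt => /predU1P[<-|/gtA].
  split; rewrite // -integral_itv_obnd_cbnd ?integral_density_ray //.
  exact: measurable_density.
have -> : A = `]c, +oo[%classic.
  apply/seteqP; split => x /=; rewrite in_itv /= andbT; last exact: gtA.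
  by move=> Ax; rewrite lt_neqAle Age // andbT; apply: contraPneq Ac => ->.
by split; rewrite // integral_density_ray.
Qed.

Context {L l u U a b : R}.

Local Notation psi := (psibar f F L l u U a b).
Local Notation above s := [set x : R | s < sat L l u U (a + x)].
Local Notation below s := [set x : R | sat L l u U (a + x) < s].

Lemma psibar_below : L <= l -> l <= u -> u <= U -> L < U ->
  b < l -> psi = F (l - b) - F (l - a).
Proof.
move=> Ll lu uU LU bl; have satb : sat L l u U b = L by rewrite /sat bl.
have massA : has_mass f (above L) (1 - F (l - a)).
  by apply: has_mass_upper => x /=; case: (satP L l u U (a + x)) => *; lra.
have massB : has_mass f (below L) 0.
  by apply: has_mass_empty => x /=; case: (satP L l u U (a + x)) => *; lra.
rewrite /psibar satb (integral_sgr_density massA massB).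
by rewrite /ind eqxx (lt_eqF LU); lra.
Qed.

Lemma psibar_above : L <= l -> l <= u -> u <= U -> L < U ->
  u < b -> psi = F (u - b) - F (u - a).
Proof.
move=> Ll lu uU LU ub; have satb : sat L l u U b = U.
  by rewrite /sat ub ltNge (le_trans lu (ltW ub)).
have massA : has_mass f (above U) 0.
  by apply: has_mass_empty => x /=; case: (satP L l u U (a + x)) => *; lra.
have massB : has_mass f (below U) (F (u - a)).
  by apply: has_mass_lower => x /=; case: (satP L l u U (a + x)) => *; lra.
rewrite /psibar satb (integral_sgr_density massA massB).
by rewrite /ind eqxx (gt_eqF LU); lra.
Qed.

Lemma psibar_between : L <= l -> l <= u -> u <= U -> L < U -> F 0 = 2^-1 ->
  l <= b -> b <= u -> psi = F 0 - F (b - a) \/ psi = 2 * (F 0 - F (b - a)).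
Proof.
move=> Ll lu uU LU F0 lb bu; have satb : sat L l u U b = b.
  by rewrite /sat !ltNge lb bu.
have massA : b < U -> has_mass f (above b) (1 - F (b - a)).
  by move=> bU; apply: has_mass_upper => x /=;
    case: (satP L l u U (a + x)) => *; lra.
have massB : L < b -> has_mass f (below b) (F (b - a)).
  by move=> Lb; apply: has_mass_lower => x /=;
    case: (satP L l u U (a + x)) => *; lra.
rewrite /psibar satb /ind.
have [bU|Ub] := ltP b U; have [Lb|bL] := ltP L b.
- right; rewrite (integral_sgr_density (massA bU) (massB Lb)).
  by rewrite (lt_eqF bU) (gt_eqF Lb); lra.
- have bL' : b = L by lra.
  have massB0 : has_mass f (below b) 0.
    by apply: has_mass_empty => x /=; case: (satP L l u U (a + x)) => *; lra.
  left; rewrite (integral_sgr_density (massA bU) massB0).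
  by rewrite (lt_eqF bU) bL' eqxx (_ : l = L) ?subrr; lra.
- have bU' : b = U by lra.
  have massA0 : has_mass f (above b) 0.
    by apply: has_mass_empty => x /=; case: (satP L l u U (a + x)) => *; lra.
  left; rewrite (integral_sgr_density massA0 (massB Lb)).
  by rewrite (gt_eqF Lb) bU' eqxx (_ : u = U) ?subrr; lra.
- lra.
Qed.

End Density.

Lemma betabar_le_density {R : realType} (f : R -> R) C l u x :
  (forall y, 0 <= f y) ->
  `|x| <= Num.max (2 * C) (Num.max (C + l) (C - u)) -> betabar f C l u <= f x.
Proof.
move=> f_ge0 hx; apply: ge_inf; last by exists x.
by exists 0 => _ [y _ <-].
Qed.

Lemma sign_bounds_scale {R : realDomainType} (beta x y k : R) : 1 <= k ->
  beta * `|x| <= `|y| /\ 0 <= x * y ->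
  beta * `|x| <= `|k * y| /\ 0 <= x * (k * y).
Proof.
move=> k1 [norm_xy sign_xy]; have k0 := le_trans ler01 k1.
rewrite normrM (ger0_norm k0) mulrCA; split; last exact: mulr_ge0.
by apply: le_trans norm_xy _; rewrite ler_peMl.
Qed.

Theorem lemma8 (R : realType) (d : nat) (D : set 'cV[R]_d)
    (theta thetabar phi : 'cV[R]_d) (Ck Cbig M L l u U : R) (f F : R -> R) :
  (* A1 *)
  convex_vset D -> compact D -> (interior D) theta ->
  D thetabar ->
  (forall x, D x -> `|dotp phi x| <= Ck) ->
  (* A2 *)
  L <= l -> l <= u -> u <= U ->
  Num.max l (- u) <= M ->
  ~ (L = l /\ l = u /\ u = U) ->
  (* A3: f is the (continuous) conditional density and F the conditional
     distribution function of eps_{k+1} given F_k *)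
  (forall x, 0 <= f x) ->
  continuous f ->
  lebesgue_measure.-integrable setT (fun x => (f x)%:E) ->
  (forall x, ((F x)%:E = \int[lebesgue_measure]_(t in `]-oo, x]) (f t)%:E)%E) ->
  (\int[lebesgue_measure]_x (f x)%:E = 1)%E ->
  F 0 = 2^-1 ->
  Ck <= Cbig ->
  (exists m : R, 0 < m /\ forall x, `|x| <= Num.max (2 * Cbig) (Cbig + M) -> m <= f x) ->
  (exists m : R, forall x, `|x| <= Num.max (2 * Cbig) (Cbig + M) -> f x <= m) ->
  let a := dotp phi theta in
  let b := dotp phi thetabar in
  let psi := psibar f F L l u U a b in
  `|psi| >= betabar f Ck l u * `|a - b| /\ (a - b) * psi >= 0.
Proof.
move=> _ _ /interior_subset Dtheta Dthetabar phiC Ll lu uU _ not_const.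
move=> f_ge0 _ f_int F_def f_mass1 F0 _ _ _ a b psi.
have /ler_normlP[Ca aC] : `|a| <= Ck := phiC _ Dtheta.
have /ler_normlP[Cb bC] : `|b| <= Ck := phiC _ Dthetabar.
have LU : L < U.
  rewrite lt_neqAle (le_trans Ll (le_trans lu uU)) andbT.
  by apply/eqP => LU; apply: not_const; split; [|split]; lra.
set K := Num.max (2 * Ck) (Num.max (Ck + l) (Ck - u)).
have [CkK lK uK] : [/\ 2 * Ck <= K, Ck + l <= K & Ck - u <= K].
  by rewrite !le_max !lexx !orbT.
have beta_le x : - K <= x -> x <= K -> betabar f Ck l u <= f x.
  move=> Kx xK; apply: betabar_le_density => //.
  by rewrite -/K; apply/ler_normlP; split; lra.
have bounds := cdf_increment_bounds f_ge0 f_int F_def beta_le.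
have [bl|lb] := ltP b l.
  rewrite /psi psibar_below // (_ : a - b = (l - b) - (l - a)); last lra.
  by apply: bounds; lra.
have [ub|bu] := ltP u b.
  rewrite /psi psibar_above // (_ : a - b = (u - b) - (u - a)); last lra.
  by apply: bounds; lra.
rewrite (_ : a - b = 0 - (b - a)); last lra.
have bounds_b : betabar f Ck l u * `|0 - (b - a)| <= `|F 0 - F (b - a)| /\
    0 <= (0 - (b - a)) * (F 0 - F (b - a)) by apply: bounds; lra.
rewrite /psi; have [->|->] :=
  psibar_between (a := a) f_ge0 f_int F_def f_mass1 Ll lu uU LU F0 lb bu.
  exact: bounds_b.
by apply: sign_bounds_scale bounds_b; lra.
Qed.
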